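(* For $p\in[0,1]$ let $M_7(p)$ be the $7\times 7$ row-stochastic matrix $$M_7(p)=\mathbb{I}_5\oplus\begin{pmatrix}p&1-p\\ \tfrac p3&1-\tfrac p3\end{pmatrix},$$ i.e. $[M_7(p)]_{ij}=\delta_{ij}$ for $i,j\le 5$, $[M_7(p)]_{66}=p$, $[M_7(p)]_{67}=1-p$, $[M_7(p)]_{76}=p/3$, $[M_7(p)]_{77}=1-p/3$, and all other entries $0$. Then $\operatorname{rank}_{\mathrm{psd}}(M_7(p))=7$ for every $p\in(0,1]$.
   Context: The psd rank of a nonnegative $n\times m$ matrix $M$, $\operatorname{rank}_{\mathrm{psd}}(M)$, is the smallest $r$ such that there exist $r\times r$ positive semidefinite matrices $R_1,\dots,R_n$ and $C_1,\dots,C_m$ with $M_{ij}=\operatorname{Tr}(R_iC_j)$ for all $i,j$. *)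

From HB Require Import structures.
From mathcomp Require Import all_boot all_order all_algebra.
From mathcomp Require Import reals.
Set Implicit Arguments. Unset Strict Implicit. Unset Printing Implicit Defensive.
Import Order.TTheory GRing.Theory Num.Theory.
Local Open Scope ring_scope.

Definition psd (R : realType) (r : nat) (A : 'M[R]_r) : Prop :=
  A^T = A /\ forall x : 'cV[R]_r, 0 <= (x^T *m A *m x) 0 0.

Definition has_psd_factorization (R : realType) (n m : nat) (M : 'M[R]_(n, m))
  (r : nat) : Prop :=
  exists (Rs : 'I_n -> 'M[R]_r) (Cs : 'I_m -> 'M[R]_r),
    (forall i, psd (Rs i)) /\ (forall j, psd (Cs j)) /\
    (forall i j, M i j = \tr (Rs i *m Cs j)).

Definition psd_rank (R : realType) (n m : nat) (M : 'M[R]_(n, m)) (r : nat)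
  : Prop :=
  has_psd_factorization M r /\
  forall r', has_psd_factorization M r' -> (r <= r')%N.

(* M_7(p) = I_5 (+) [[p, 1-p], [p/3, 1-p/3]] (0-based indices 5,6) *)
Definition M7 (R : realType) (p : R) : 'M[R]_7 :=
  \matrix_(i < 7, j < 7)
    if ((i < 5)%N && (i == j :> nat)) then 1
    else if ((i == 5 :> nat) && (j == 5 :> nat)) then p
    else if ((i == 5 :> nat) && (j == 6 :> nat)) then 1 - p
    else if ((i == 6 :> nat) && (j == 5 :> nat)) then p / 3
    else if ((i == 6 :> nat) && (j == 6 :> nat)) then 1 - p / 3
    else 0.

(* A psd factorization of size r of M_7(p) has R_i C_j = 0 whenever M_ij = 0,
   since tr(AB) = 0 forces AB = 0 for psd A and B.  For a symmetric R_k, the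
   entry (R_k C_l)_{ij} is the inner product of column i of R_k with column j
   of C_l.  For each k <= 5 pick a nonzero entry of R_k C_k; on the 2 x 2 block
   some 2 x 2 minor of the entries of the products R_a C_b is nonzero, for
   otherwise tr(R_6 C_6) tr(R_7 C_7) = tr(R_6 C_7) tr(R_7 C_6), contradicting
   det = 2p/3 <> 0.  The chosen columns form r x 7 matrices X, Y whose product
   X^T Y is block triangular with invertible diagonal blocks, so 7 <= r.  The
   bound 7 is attained by the diagonal factorization of a nonnegative matrix. *)

From HB Require Import structures.
From mathcomp Require Import all_boot all_order all_algebra.
From mathcomp Require Import reals ring lra.
From Stdlib Require Import Classical.
Import Order.TTheory GRing.Theory Num.Theory.
Local Open Scope ring_scope.
Set Implicit Arguments. Unset Strict Implicit. Unset Printing Implicit Defensive.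

Lemma det_mx22 (R : comNzRingType) (N : 'M[R]_2) :
  \det N = N 0 0 * N 1 1 - N 0 1 * N 1 0.
Proof.
rewrite (expand_det_row _ 0) !big_ord_recl big_ord0 /cofactor !det_mx11 !mxE /=.
have [-> ->] : lift 0 0 = 1 :> 'I_2 /\ lift (lift 0 0) 0 = 0 :> 'I_2.
  by split; apply: val_inj.
by rewrite /bump /= expr0 expr1; ring.
Qed.

Lemma quad_ge0_linear_eq0 (R : realFieldType) (b q : R) :
  0 <= q -> (forall t, 0 <= 2 * t * b + t ^+ 2 * q) -> b = 0.
Proof.
move=> q_ge0 /(_ (- b / (q + 1))).
have -> : 2 * (- b / (q + 1)) * b + (- b / (q + 1)) ^+ 2 * q =
          - (b / (q + 1)) ^+ 2 * (q + 2) by field; lra.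
move=> h; have u0 : b / (q + 1) = 0 by nra.
by move/eqP: u0; rewrite mulf_eq0 invr_eq0 => /orP[/eqP // | ]; lra.
Qed.

Section QuadraticForm.
Variables (R : realType) (r : nat).
Implicit Types (A B : 'M[R]_r) (x y : 'cV[R]_r).

Definition bform x A y : R := (x^T *m A *m y) 0 0.

Lemma bform_sym A x y : A^T = A -> bform x A y = bform y A x.
Proof.
move=> sA; rewrite /bform; transitivity ((x^T *m A *m y)^T 0 0).
  by rewrite [RHS]mxE.
by rewrite !trmx_mul trmxK sA mulmxA.
Qed.

Lemma bform_addZ A x y t : A^T = A ->
  bform (x + t *: y) A (x + t *: y) =
  bform x A x + 2 * t * bform y A x + t ^+ 2 * bform y A y.
Proof.
move=> sA; rewrite /bform [(x + _)^T]raddfD /= [(t *: y)^T]linearZ /=.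
rewrite !(mulmxDl, mulmxDr) -!(scalemxAl, scalemxAr).
have := bform_sym x y sA; rewrite /bform.
move: (x^T *m A *m x) (y^T *m A *m x) (x^T *m A *m y) (y^T *m A *m y) => a b b' c.
by rewrite !mxE => ->; ring.
Qed.

Lemma bform_delta A k l : bform (delta_mx k 0) A (delta_mx l 0) = A k l.
Proof. by rewrite /bform trmx_delta -rowE -colE !mxE. Qed.

Lemma trace_mul_rank1 A x : \tr (A *m (x *m x^T)) = bform x A x.
Proof. by rewrite mulmxA mxtrace_mulC /bform mulmxA /mxtrace big_ord1. Qed.

Lemma dot_self_eq0 x : (x^T *m x) 0 0 = 0 -> x = 0.
Proof.
rewrite mxE => /eqP; rewrite psumr_eq0 => [/allP x0|i _]; last first.
  by rewrite mxE -expr2 sqr_ge0.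
apply/matrixP => i j; rewrite (ord1 j) !mxE.
have /implyP/(_ isT) := x0 i (mem_index_enum i).
by rewrite mxE -expr2 sqrf_eq0 => /eqP.
Qed.

Lemma psd_bform_eq0 A x : psd A -> bform x A x = 0 -> A *m x = 0.
Proof.
move=> [sA qA] x0; apply: dot_self_eq0.
have -> : ((A *m x)^T *m (A *m x)) 0 0 = bform (A *m x) A x by rewrite /bform mulmxA.
apply: (quad_ge0_linear_eq0 (qA (A *m x))) => t.
by have := qA (x + t *: (A *m x)); rewrite -/(bform _ _ _) bform_addZ // x0 add0r.
Qed.

Lemma psd_diag_ge0 A k : psd A -> 0 <= A k k.
Proof. by case=> _ /(_ (delta_mx k 0)); rewrite -/(bform _ _ _) bform_delta. Qed.

Lemma psd_eq0 A : psd A -> (forall k, A k k = 0) -> A = 0.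
Proof.
move=> pA diag0; apply/matrixP => i k.
have /matrixP/(_ i 0) := psd_bform_eq0 pA (etrans (bform_delta A k k) (diag0 k)).
by rewrite -colE !mxE.
Qed.

Definition diag_support A := [set k | A k k != 0].

Lemma psd_sub_rank1 A j : psd A -> 0 < A j j ->
  psd (A - (A j j)^-1 *: (col j A *m (col j A)^T)).
Proof.
move=> [sA qA] c_gt0; set c := A j j; set w := col j A.
split; first by rewrite linearB linearZ /= trmx_mul trmxK sA.
move=> x; rewrite -/(bform _ _ _); set b := bform (delta_mx j 0) A x.
have wx : (x^T *m w) 0 0 = b by rewrite /b bform_sym // /bform /w colE mulmxA.
have -> : bform x (A - c^-1 *: (w *m w^T)) x = bform x A x - c^-1 * b ^+ 2.
  rewrite -wx /bform mulmxBr mulmxBl -scalemxAr -scalemxAl.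
  rewrite (_ : x^T *m (w *m w^T) *m x = (x^T *m w) *m (x^T *m w)^T); last first.
    by rewrite trmx_mul trmxK !mulmxA.
  move: (x^T *m A *m x) (x^T *m w) => a v.
  by rewrite !mxE big_ord1 !mxE expr2.
have := qA (x + (- b / c) *: delta_mx j 0).
rewrite -/(bform _ _ _) bform_addZ // bform_delta -/c.
have -> : bform x A x + 2 * (- b / c) * b + (- b / c) ^+ 2 * c =
          bform x A x - c^-1 * b ^+ 2 by field; rewrite gt_eqF.
done.
Qed.

Lemma diag_support_sub_rank1 A j : psd A -> 0 < A j j ->
  (#|diag_support (A - (A j j)^-1 *: (col j A *m (col j A)^T))| <
   #|diag_support A|)%N.
Proof.
move=> pA c_gt0; set A' := A - _.
have A'E k : A' k k = A k k - (A j j)^-1 * A k j ^+ 2.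
  by rewrite !mxE big_ord1 !mxE expr2.
have sub : diag_support A' \subset diag_support A :\ j.
  apply/subsetP => k; rewrite !inE => A'k; apply/andP; split.
    apply: contraNneq A'k => ->; rewrite A'E expr2 mulrA mulVf ?mul1r ?subrr //.
    exact: lt0r_neq0.
  apply: contraNneq A'k => Akk0; rewrite eq_le psd_diag_ge0 ?andbT //.
    by rewrite A'E Akk0 sub0r oppr_le0 mulr_ge0 ?sqr_ge0 // invr_ge0 ltW.
  exact: psd_sub_rank1.
apply: leq_ltn_trans (subset_leq_card sub) _.
by rewrite [X in (_ < X)%N](cardsD1 j) inE lt0r_neq0.
Qed.

Lemma psd_sum_rank1 A : psd A -> exists s : seq 'cV[R]_r, A = \sum_(v <- s) v *m v^T.
Proof.
have [n] := ubnP #|diag_support A|; elim: n A => // n IH A.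
rewrite ltnS => supp_le pA.
have [supp0 | [j]] := set_0Vmem (diag_support A).
  exists [::]; rewrite big_nil; apply: psd_eq0 => // k.
  by apply/eqP; apply: contraFT (in_set0 k) => Akk; rewrite -supp0 inE.
rewrite inE => Ajj_neq0.
have c_gt0 : 0 < A j j by rewrite lt0r Ajj_neq0 psd_diag_ge0.
set w := col j A.
have [s sE] := IH _ (leq_trans (diag_support_sub_rank1 pA c_gt0) supp_le)
                   (psd_sub_rank1 pA c_gt0).
exists ((Num.sqrt (A j j))^-1 *: w :: s); rewrite big_cons -sE.
rewrite linearZ /= -scalemxAl -scalemxAr scalerA -invfM -expr2 sqr_sqrtr ?ltW //.
by rewrite addrC subrK.
Qed.

Lemma psd_trace_mul_eq0 A B : psd A -> psd B -> \tr (A *m B) = 0 -> A *m B = 0.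
Proof.
move=> pA /psd_sum_rank1[s ->].
rewrite mulmx_sumr raddf_sum /= => /eqP; rewrite psumr_eq0 => [/allP v0|v _]; last first.
  by rewrite trace_mul_rank1; case: pA => _; apply.
rewrite big_seq big1 // => v sv; rewrite mulmxA psd_bform_eq0 ?mul0mx //.
by apply/eqP; rewrite -trace_mul_rank1; apply: (implyP (v0 v sv)).
Qed.

End QuadraticForm.

Section PsdFactorization.
Variable R : realType.

Lemma psd_diag_mx n (d : 'rV[R]_n) : (forall k, 0 <= d 0 k) -> psd (diag_mx d).
Proof.
move=> d_ge0; split; first by rewrite tr_diag_mx.
move=> x; rewrite mul_mx_diag mxE sumr_ge0 // => k _; rewrite !mxE.
by rewrite mulrAC -expr2 mulr_ge0 ?sqr_ge0.
Qed.

Lemma nonneg_psd_factorization n m (M : 'M[R]_(n, m)) :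
  (forall i j, 0 <= M i j) -> has_psd_factorization M m.
Proof.
move=> M_ge0; exists (fun i => diag_mx (row i M)), (fun j => diag_mx (delta_mx 0 j)).
split; [|split].
- by move=> i; apply: psd_diag_mx => k; rewrite mxE.
- by move=> j; apply: psd_diag_mx => k; rewrite mxE; case: (_ && _).
move=> i j; rewrite mulmx_diag mxtrace_diag (bigD1 j) //= big1 => [|k /negbTE kj].
  by rewrite !mxE !eqxx mulr1 addr0.
by rewrite !mxE kj mulr0.
Qed.

Definition col_pick r n (F : 'I_n -> 'M[R]_r) (c : 'I_n -> 'I_r) : 'M[R]_(r, n) :=
  \matrix_(s, k) F k s (c k).

Lemma col_pick_gram r n n' (F : 'I_n -> 'M[R]_r) (G : 'I_n' -> 'M[R]_r) ri cj :
  (forall k, (F k)^T = F k) ->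
  (col_pick F ri)^T *m col_pick G cj = \matrix_(k, l) (F k *m G l) (ri k) (cj l).
Proof.
move=> sF; apply/matrixP => k l; rewrite !mxE; apply: eq_bigr => s _.
by rewrite !mxE -[F k in RHS]sF mxE.
Qed.

Lemma unitmx_gram_leq r n (X Y : 'M[R]_(r, n)) : X^T *m Y \in unitmx -> (n <= r)%N.
Proof.
move=> /mxrank_unit <-; exact: leq_trans (mxrankM_maxl _ _) (rank_leq_col _).
Qed.

Lemma trace_mul_of_rank1_minors r (P Q S T : 'M[R]_r) :
  (forall i j, P i j * Q j i = S i i * T j j) -> \tr (P *m Q) = \tr S * \tr T.
Proof.
move=> PQ; rewrite /mxtrace mulr_suml; apply: eq_bigr => i _.
by rewrite mxE mulr_sumr; apply: eq_bigr => j _.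
Qed.

Lemma trace_mul_swap r (R0 R1 C0 C1 : 'M[R]_r) :
  R0^T = R0 -> R1^T = R1 -> C0^T = C0 -> C1^T = C1 ->
  \tr (R0 *m C0 *m (R1 *m C1)) = \tr (R0 *m C1 *m (R1 *m C0)).
Proof.
move=> s0 s1 t0 t1.
by rewrite -mxtrace_tr !trmx_mul s0 s1 t0 t1 !mulmxA mxtrace_mulC !mulmxA.
Qed.

Lemma exists_product_minor_neq0 r (Rf Cf : 'I_2 -> 'M[R]_r) :
  (forall a, (Rf a)^T = Rf a) -> (forall b, (Cf b)^T = Cf b) ->
  \det (\matrix_(a, b) \tr (Rf a *m Cf b)) != 0 ->
  exists (a b : 'I_2 -> 'I_2) (ri cj : 'I_2 -> 'I_r),
    \det (\matrix_(s, t) (Rf (a s) *m Cf (b t)) (ri s) (cj t)) != 0.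
Proof.
move=> sR sC det_neq0; apply: NNPP => no_minor.
pose P a b := Rf a *m Cf b.
have minor0 a a' b b' i i' j j' :
    P a b i j * P a' b' i' j' = P a b' i j' * P a' b i' j.
  apply/eqP; rewrite -subr_eq0; apply/negPn/negP => minor_neq0; apply: no_minor.
  exists (fun s => if s == 0 then a else a'), (fun t => if t == 0 then b else b').
  exists (fun s => if s == 0 then i else i'), (fun t => if t == 0 then j else j').
  by rewrite det_mx22 !(@mxE _ _ _ matrix_key).
have e1 : \tr (P 0 0 *m P 1 1) = \tr (P 0 1) * \tr (P 1 0).
  by apply: trace_mul_of_rank1_minors => i j; apply: minor0.
have e2 : \tr (P 0 1 *m P 1 0) = \tr (P 0 0) * \tr (P 1 1).
  by apply: trace_mul_of_rank1_minors => i j; apply: minor0.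
move: det_neq0; rewrite det_mx22 !(@mxE _ _ _ matrix_key).
rewrite -/(P 0 0) -/(P 1 1) -/(P 0 1) -/(P 1 0).
by rewrite -e1 -e2 trace_mul_swap ?subrr ?eqxx.
Qed.

Lemma block_psd_factorization_size m r (d : 'rV[R]_m) (U : 'M[R]_(m, 2))
    (B : 'M[R]_2) (Rs Cs : 'I_(m + 2) -> 'M[R]_r) :
  (forall k, d 0 k != 0) -> \det B != 0 ->
  (forall i, psd (Rs i)) -> (forall j, psd (Cs j)) ->
  (forall i j, block_mx (diag_mx d) U 0 B i j = \tr (Rs i *m Cs j)) ->
  (m + 2 <= r)%N.
Proof.
move=> d_neq0 detB psdR psdC factM.
have sR i : (Rs i)^T = Rs i by case: (psdR i).
have sC j : (Cs j)^T = Cs j by case: (psdC j).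
have prod0 i j : block_mx (diag_mx d) U 0 B i j = 0 -> Rs i *m Cs j = 0.
  by rewrite factM; apply: psd_trace_mul_eq0.
pose Rl k := Rs (lshift 2 k); pose Cl k := Cs (lshift 2 k).
pose Rr a := Rs (rshift m a); pose Cr b := Cs (rshift m b).
have /fin_all_exists[f f_neq0] :
    forall k, exists ij : 'I_r * 'I_r, (Rl k *m Cl k) ij.1 ij.2 != 0.
  move=> k; have /matrix0Pn[i [j ij]] : Rl k *m Cl k != 0.
    apply: contraNneq (d_neq0 k) => prod_eq0.
    have := factM (lshift 2 k) (lshift 2 k); rewrite block_mxEul mxE eqxx mulr1n => ->.
    by rewrite -/(Rl k) -/(Cl k) prod_eq0 linear0.
  by exists (i, j).
have detB' : \det (\matrix_(a, b) \tr (Rr a *m Cr b)) != 0.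
  rewrite (_ : \matrix_(a, b) _ = B) //.
  by apply/matrixP => a b; rewrite mxE -factM block_mxEdr.
have [a [b [ri [cj minor]]]] :=
  exists_product_minor_neq0 (fun a => sR (rshift m a)) (fun b => sC (rshift m b)) detB'.
pose X := row_mx (col_pick Rl (fun k => (f k).1)) (col_pick (Rr \o a) ri).
pose Y := row_mx (col_pick Cl (fun k => (f k).2)) (col_pick (Cr \o b) cj).
apply: (@unitmx_gram_leq r (m + 2) X Y).
rewrite tr_row_mx mul_col_row !col_pick_gram; try by move=> ?; apply: sR.
have lower0 : \matrix_(k, l) ((Rr \o a) k *m Cl l) (ri k) (f l).2 = 0.
  apply/matrixP => s l; rewrite (@mxE _ _ _ matrix_key) [RHS]mxE /=.
  by rewrite prod0 ?block_mxEdl mxE.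
have diag : \matrix_(k, l) (Rl k *m Cl l) (f k).1 (f l).2 =
            diag_mx (\row_k (Rl k *m Cl k) (f k).1 (f k).2).
  apply/matrixP => k l; rewrite [RHS]mxE !(@mxE _ _ _ matrix_key).
  have [<-|kl] := eqVneq k l; first by rewrite mulr1n.
  by rewrite mulr0n prod0 ?block_mxEul mxE // (negbTE kl) mulr0n.
rewrite lower0 unitmxE det_ublock unitfE mulf_neq0 // diag det_diag.
by apply/prodf_neq0 => k _; rewrite mxE.
Qed.

End PsdFactorization.

Section M7.
Variables (R : realType) (p : R).

Lemma M7_block : M7 p = block_mx (diag_mx (const_mx 1)) (ursubmx (M7 p : 'M_(5 + 2)))
                                  0 (drsubmx (M7 p : 'M_(5 + 2))).
Proof.
have ul : ulsubmx (M7 p : 'M_(5 + 2)) = diag_mx (const_mx 1).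
  apply/matrixP => i j; rewrite !mxE.
  by case: i => [[|[|[|[|[|?]]]]] ?] //; case: j => [[|[|[|[|[|?]]]]] ?].
have dl : dlsubmx (M7 p : 'M_(5 + 2)) = 0.
  apply/matrixP => i j; rewrite !mxE.
  by case: i => [[|[|?]] ?] //; case: j => [[|[|[|[|[|?]]]]] ?].
by rewrite -ul -dl submxK.
Qed.

Lemma det_M7_block : \det (drsubmx (M7 p : 'M_(5 + 2))) = 2 * p / 3.
Proof. by rewrite det_mx22 !mxE /=; field. Qed.

Lemma M7_ge0 i j : 0 <= p -> p <= 1 -> 0 <= M7 p i j.
Proof.
move=> p_ge0 p_le1; rewrite mxE.
by repeat case: ifP => _; rewrite ?ler01 // ?subr_ge0; lra.
Qed.
End M7.

Theorem lemma4 (R : realType) (p : R) :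
  0 < p -> p <= 1 -> psd_rank (M7 p) 7.
Proof.
move=> p_gt0 p_le1; split.
  exact: nonneg_psd_factorization (fun i j => M7_ge0 i j (ltW p_gt0) p_le1).
move=> r [Rs [Cs [psdR [psdC factM]]]]; rewrite M7_block in factM.
apply: (block_psd_factorization_size (m := 5) _ _ psdR psdC factM).
  by move=> k; rewrite mxE oner_eq0.
by rewrite det_M7_block !mulf_neq0 ?invr_eq0 ?gt_eqF ?pnatr_eq0.
Qed.
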